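(* Let $R$ be a commutative Bezout domain. The following are equivalent: (1) $R$ has stable range 1.5; (2) $GL_2(R)=\mathbf G_\Phi\, U_2^{lw}(R)\,U_2^{up}(R)$ for every nonsingular $2\times2$ $d$-matrix $\Phi$; (3) $GL_n(R)=\mathbf G_\Phi\, U_n^{lw}(R)\,U_n^{up}(R)$ for every $n\ge2$ and every nonsingular $n\times n$ $d$-matrix $\Phi$.
   Context: A commutative Bezout domain is a commutative integral domain with $1\ne0$ in which every finitely generated ideal is principal. It has stable range 1.5 if for all $a,b\in R$ and $c\in R\setminus\{0\}$ with $(a,b,c)=1$ there is $r\in R$ with $(a+br,c)=1$. A $d$-matrix is a diagonal matrix $\mathrm{diag}(\varphi_1,\dots,\varphi_n)$ with $\varphi_i\mid\varphi_{i+1}$. $\mathbf G_\Phi=\{H\in GL_n(R):\ \exists K\in GL_n(R),\ H\Phi=\Phi K\}$. $U_n^{lw}(R)$ and $U_n^{up}(R)$ denote the groups of lower and upper unitriangular $n\times n$ matrices (triangular with $1$'s on the diagonal). For sets of matrices, $XYZ=\{xyz: x\in X,y\in Y,z\in Z\}$. *)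

From HB Require Import structures.
From mathcomp Require Import all_boot all_order all_algebra.
Set Implicit Arguments. Unset Strict Implicit. Unset Printing Implicit Defensive.
Import GRing.Theory.
Local Open Scope ring_scope.

Section Defs.
Variable R : idomainType.

Definition dvdR (a b : R) : Prop := exists c : R, b = c * a.

Definition in_ideal (s : seq R) (x : R) : Prop :=
  exists c : seq R, size c = size s /\ x = \sum_(i < size s) c`_i * s`_i.

Definition bezout_domain : Prop :=
  forall s : seq R, exists d : R, forall x, in_ideal s x <-> in_ideal [:: d] x.

Definition stable_range_1_5 : Prop :=
  forall a b c : R, c != 0 -> in_ideal [:: a; b; c] 1 ->
    exists r : R, in_ideal [:: a + b * r; c] 1.

Definition is_dmatrix (n : nat) (Phi : 'M[R]_n) : Prop :=
  exists phi : 'rV[R]_n,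
    Phi = diag_mx phi /\
    forall (i j : 'I_n), j = i.+1 :> nat -> dvdR (phi 0 i) (phi 0 j).

Definition G_Phi (n : nat) (Phi : 'M[R]_n) (H : 'M[R]_n) : Prop :=
  H \in unitmx /\ exists K : 'M[R]_n, K \in unitmx /\ H *m Phi = Phi *m K.

Definition lower_unitri (n : nat) (L : 'M[R]_n) : Prop :=
  forall i j : 'I_n, (if (i < j)%N then L i j = 0 else True) /\ (i = j -> L i j = 1).

Definition upper_unitri (n : nat) (U : 'M[R]_n) : Prop :=
  forall i j : 'I_n, (if (j < i)%N then U i j = 0 else True) /\ (i = j -> U i j = 1).

Definition GL_factor (n : nat) (Phi : 'M[R]_n) : Prop :=
  forall A : 'M[R]_n, A \in unitmx <->
    exists H L U : 'M[R]_n,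
      [/\ G_Phi Phi H, lower_unitri L, upper_unitri U & A = H *m L *m U].

End Defs.

(* Stable range 1.5 moves any unimodular column, by an element of G_Phi, to one
   with first entry 1: with e a gcd of the entries below a_0, stable range makes
   a_0 + e k coprime to a nonzero a_l, and a second application completes
   (a_0 + e k, a_l) to a determinant-one 2x2 block whose lower-left entry is a
   multiple of phi_l / phi_0, hence lies in G_Phi. Clearing the first column of
   an invertible matrix this way and recursing on the Schur complement gives
   GL_n = G_Phi U^lw U^up. Conversely, factoring a matrix with bottom row (s, t)
   for Phi = diag(1, c) yields u with t - s u coprime to c, which is stable
   range 1.5 once a and b are divided by their gcd. *)

From HB Require Import structures.
From mathcomp Require Import all_boot all_order all_algebra.
From mathcomp Require Import ring.
Set Implicit Arguments. Unset Strict Implicit. Unset Printing Implicit Defensive.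
Import GRing.Theory.
Local Open Scope ring_scope.

Section Divisibility.
Variable R : idomainType.
Implicit Types a b c d x y : R.

Lemma in_ideal1P d x : in_ideal [:: d] x <-> exists c, x = c * d.
Proof.
split; first by case=> c [_ ->]; rewrite big_ord1; exists c`_0.
by case=> c ->; exists [:: c]; rewrite big_ord1.
Qed.

Lemma in_ideal2P x y z : in_ideal [:: x; y] z <-> exists u v, z = u * x + v * y.
Proof.
split; first by case=> c [_ ->]; rewrite !big_ord_recl big_ord0 addr0; exists c`_0, c`_1.
by case=> u [v ->]; exists [:: u; v]; rewrite !big_ord_recl big_ord0 addr0.
Qed.

Lemma in_ideal3P x y w z :
  in_ideal [:: x; y; w] z <-> exists u v t, z = u * x + v * y + t * w.
Proof.
split.
  case=> c [_ ->]; rewrite !big_ord_recl big_ord0 addr0 addrA.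
  by exists c`_0, c`_1, c`_2.
case=> u [v [t ->]]; exists [:: u; v; t].
by rewrite !big_ord_recl big_ord0 addr0 addrA.
Qed.

Lemma dvdR_refl a : dvdR a a.
Proof. by exists 1; rewrite mul1r. Qed.

Lemma dvdR0 a : dvdR a 0.
Proof. by exists 0; rewrite mul0r. Qed.

Lemma dvdR_trans a b c : dvdR a b -> dvdR b c -> dvdR a c.
Proof. by case=> x -> [y ->]; exists (y * x); rewrite mulrA. Qed.

Lemma dvdR_mull a b c : dvdR a b -> dvdR a (c * b).
Proof. by case=> x ->; exists (c * x); rewrite mulrA. Qed.

Lemma dvdR_add a b c : dvdR a b -> dvdR a c -> dvdR a (b + c).
Proof. by case=> x -> [y ->]; exists (x + y); rewrite mulrDl. Qed.

Lemma dvdR_sum n (F : 'I_n -> R) a : (forall i, dvdR a (F i)) -> dvdR a (\sum_i F i).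
Proof. by move=> h; elim/big_ind: _ => //; [apply: dvdR0 | apply: dvdR_add]. Qed.

Definition coprimeR x y := exists u v, u * x + v * y = 1.

Lemma coprimeR_sym x y : coprimeR x y -> coprimeR y x.
Proof. by case=> u [v e]; exists v, u; rewrite addrC. Qed.

Lemma coprimeR_mull x y c : coprimeR x c -> coprimeR y c -> coprimeR (x * y) c.
Proof.
case=> u1 [v1 e1] [u2 [v2 e2]].
exists (u1 * u2), (u1 * x * v2 + v1 * (u2 * y + v2 * c)).
have E : (u1 * x + v1 * c) * (u2 * y + v2 * c) = 1 by rewrite e1 e2 mulr1.
by rewrite -E; ring.
Qed.

Lemma coprimeR_completion g1 g2 psi : coprimeR g1 g2 -> coprimeR g1 psi ->
  exists h m, g1 * h - g2 * (psi * m) = 1.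
Proof.
move=> c12 c1p.
have [u [v e]] := coprimeR_mull (coprimeR_sym c12) (coprimeR_sym c1p).
by exists v, (- u); rewrite -e; ring.
Qed.

End Divisibility.

Section Bezout.
Variable R : idomainType.
Hypothesis bezoutR : bezout_domain R.

Lemma bezout_gcd2 (x y : R) : exists g p q u v,
  [/\ x = p * g, y = q * g & g = u * x + v * y].
Proof.
have [g Hg] := bezoutR [:: x; y].
have /Hg/in_ideal1P [p Hp] : in_ideal [:: x; y] x.
  by apply/in_ideal2P; exists 1, 0; rewrite mul1r mul0r addr0.
have /Hg/in_ideal1P [q Hq] : in_ideal [:: x; y] y.
  by apply/in_ideal2P; exists 0, 1; rewrite mul1r mul0r add0r.
have /Hg/in_ideal2P [u [v Huv]] : in_ideal [:: g] g by apply/in_ideal1P; exists 1; rewrite mul1r.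
by exists g, p, q, u, v.
Qed.

Lemma bezout_gcd_family n (f : 'I_n -> R) : exists e (s : 'I_n -> R),
  e = \sum_i s i * f i /\ forall i, dvdR e (f i).
Proof.
elim: n f => [|n IH] f.
  by exists 0, (fun _ => 0); split; [rewrite big_ord0 | case].
have [e [s [He Hd]]] := IH (fun i => f (lift ord0 i)).
have [g [p [q [u [v [E1 E2 E3]]]]]] := bezout_gcd2 (f ord0) e.
exists g, (fun i => if unlift ord0 i is Some j then v * s j else u); split.
  rewrite big_ord_recl unlift_none E3 He mulr_sumr; congr (_ + _).
  by apply: eq_bigr => i _; rewrite liftK mulrA.
move=> i; case: (unliftP ord0 i) => [j ->|->]; last by exists p.
by apply: dvdR_trans (Hd j); exists q.
Qed.

End Bezout.

Section Unitriangular.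
Variables (R : idomainType) (n : nat).

Lemma lower_unitri_unitmx (L : 'M[R]_n) : lower_unitri L -> L \in unitmx.
Proof.
move=> hL; rewrite unitmxE det_trig.
  by rewrite big1 ?unitr1 // => i _; case: (hL i i) => _ ->.
by apply/is_trig_mxP => i j lt; case: (hL i j); rewrite lt.
Qed.

Lemma upper_unitri_unitmx (U : 'M[R]_n) : upper_unitri U -> U \in unitmx.
Proof.
move=> hU; rewrite unitmxE -det_tr det_trig.
  by rewrite big1 ?unitr1 // => i _; rewrite mxE; case: (hU i i) => _ ->.
by apply/is_trig_mxP => i j lt; rewrite mxE; case: (hU j i); rewrite lt.
Qed.

Lemma lower_unitri1 : lower_unitri (1%:M : 'M[R]_n).
Proof.
move=> i j; rewrite mxE; split=> [|-> //]; last by rewrite eqxx.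
by case: ltnP => // ij; rewrite (_ : i == j = false) // -(inj_eq val_inj) ltn_eqF.
Qed.

Lemma upper_unitri1 : upper_unitri (1%:M : 'M[R]_n).
Proof.
move=> i j; rewrite mxE; split=> [|-> //]; last by rewrite eqxx.
by case: ltnP => // ji; rewrite (_ : i == j = false) // -(inj_eq val_inj) gtn_eqF.
Qed.

End Unitriangular.

Section GPhiGroup.
Variables (R : idomainType) (n : nat) (Phi : 'M[R]_n).

Lemma G_Phi_unitmx H : G_Phi Phi H -> H \in unitmx.
Proof. by case. Qed.

Lemma G_Phi1 : G_Phi Phi 1%:M.
Proof. by split; [apply: unitmx1 | exists 1%:M; rewrite unitmx1 mul1mx mulmx1]. Qed.

Lemma G_Phi_mul H1 H2 : G_Phi Phi H1 -> G_Phi Phi H2 -> G_Phi Phi (H1 *m H2).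
Proof.
case=> u1 [K1 [k1 e1]] [u2 [K2 [k2 e2]]]; split; first by rewrite unitmx_mul u1 u2.
exists (K1 *m K2); split; first by rewrite unitmx_mul k1 k2.
by rewrite -mulmxA e2 !mulmxA e1.
Qed.

Lemma G_Phi_inv H : G_Phi Phi H -> G_Phi Phi (invmx H).
Proof.
case=> u [K [k e]]; split; first by rewrite unitmx_inv.
exists (invmx K); split; first by rewrite unitmx_inv.
apply: (canRL (mulmxK k)).
by rewrite -mulmxA -e mulmxA mulVmx // mul1mx.
Qed.

End GPhiGroup.

Definition dvd_chain (R : idomainType) n (phi : 'rV[R]_n) :=
  forall i j : 'I_n, (i <= j)%N -> dvdR (phi 0 i) (phi 0 j).

Lemma dvd_chain_rsubmx (R : idomainType) n (phi : 'rV[R]_(1 + n)) :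
  dvd_chain phi -> dvd_chain (rsubmx phi).
Proof. by move=> phi_chain i j ij; rewrite !mxE; apply: phi_chain; rewrite leq_add2l. Qed.

Section GPhiDiag.
Variables (R : idomainType) (n : nat) (phi : 'rV[R]_n).
Hypothesis phi_neq0 : forall i, phi 0 i != 0.

Lemma G_Phi_diagP H : G_Phi (diag_mx phi) H <->
  H \in unitmx /\ forall i j, dvdR (phi 0 i) (H i j * phi 0 j).
Proof.
split.
  case=> hu [K [_ eK]]; split => // i j; exists (K i j).
  have := congr1 (fun M : 'M[R]_n => M i j) eK.
  by rewrite mul_mx_diag mul_diag_mx !mxE => ->; rewrite mulrC.
case=> hu hd; split => //.
have ex i j : exists c, H i j * phi 0 j == c * phi 0 i.
  by have [c hc] := hd i j; exists c; rewrite hc.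
pose K := \matrix_(i, j) xchoose (ex i j).
have eK : H *m diag_mx phi = diag_mx phi *m K.
  apply/matrixP => i j; rewrite mul_mx_diag mul_diag_mx !mxE.
  by move: (xchooseP (ex i j)); move: (xchoose _) => c /eqP ->; rewrite mulrC.
exists K; split => //; move: hu; rewrite !unitmxE.
have detphi : \det (diag_mx phi) != 0 by rewrite det_diag; apply/prodf_neq0.
have : \det (H *m diag_mx phi) = \det (diag_mx phi *m K) by rewrite eK.
by rewrite !det_mulmx mulrC => /(mulfI detphi) ->.
Qed.

Hypothesis phi_chain : dvd_chain phi.

Lemma upper_unitri_G_Phi U : upper_unitri U -> G_Phi (diag_mx phi) U.
Proof.
move=> hU; apply/G_Phi_diagP; split; first exact: upper_unitri_unitmx.
move=> i j; case: (ltnP j i) => [ji|ij].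
  by have [] := hU i j; rewrite ji => -> _; rewrite mul0r; apply: dvdR0.
exact/dvdR_mull/phi_chain.
Qed.

End GPhiDiag.

Section PlaneMatrix.
Variables (R : comUnitRingType) (N : nat) (p q : 'I_N).
Hypothesis neq_pq : p != q.

Definition plane_mx (x00 x01 x10 x11 : R) : 'M[R]_N :=
  1%:M + (x00 - 1) *: delta_mx p p + x01 *: delta_mx p q
       + x10 *: delta_mx q p + (x11 - 1) *: delta_mx q q.

Lemma plane_mxE x00 x01 x10 x11 i j : plane_mx x00 x01 x10 x11 i j =
  if i == p then (if j == p then x00 else if j == q then x01 else 0)
  else if i == q then (if j == p then x10 else if j == q then x11 else 0)
  else (i == j)%:R.
Proof.
have neq_qp : q != p by rewrite eq_sym.
rewrite !mxE; have [-> | ip] := eqVneq i p; last have [-> | iq] := eqVneq i q;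
  have [-> | jp] := eqVneq j p;
  rewrite ?eqxx ?(negbTE neq_pq) ?(negbTE neq_qp) ?(negbTE ip) ?(negbTE iq)
          ?(negbTE jp) 1?[q == j]eq_sym /=; case: (j == q) => /=; case: (i == j) => /=; ring.
Qed.

Lemma plane_mx_mulE x00 x01 x10 x11 k (B : 'M[R]_(N, k)) i j :
  (plane_mx x00 x01 x10 x11 *m B) i j =
  if i == p then x00 * B p j + x01 * B q j
  else if i == q then x10 * B p j + x11 * B q j
  else B i j.
Proof.
have neq_qp : q != p by rewrite eq_sym.
rewrite mxE; case: ifP => [/eqP -> | /negbT ip]; last case: ifP => [/eqP -> | /negbT iq].
- rewrite (bigD1 p) // (bigD1 q) //= big1 ?addr0 => [|r /andP [rp rq]].
    by rewrite !plane_mxE !eqxx (negbTE neq_qp).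
  by rewrite plane_mxE eqxx (negbTE rp) (negbTE rq) mul0r.
- rewrite (bigD1 p) // (bigD1 q) //= big1 ?addr0 => [|r /andP [rp rq]].
    by rewrite !plane_mxE !eqxx (negbTE neq_qp).
  by rewrite plane_mxE eqxx (negbTE neq_qp) (negbTE rp) (negbTE rq) mul0r.
rewrite (bigD1 i) //= big1 ?addr0 => [|r ri].
  by rewrite plane_mxE (negbTE ip) (negbTE iq) eqxx mul1r.
by rewrite plane_mxE (negbTE ip) (negbTE iq) eq_sym (negbTE ri) mul0r.
Qed.

Lemma plane_mx_mul x00 x01 x10 x11 y00 y01 y10 y11 :
  plane_mx x00 x01 x10 x11 *m plane_mx y00 y01 y10 y11 =
  plane_mx (x00 * y00 + x01 * y10) (x00 * y01 + x01 * y11)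
           (x10 * y00 + x11 * y10) (x10 * y01 + x11 * y11).
Proof.
have neq_qp : q != p by rewrite eq_sym.
apply/matrixP => i j; rewrite plane_mx_mulE !plane_mxE [q == j]eq_sym.
case: (eqVneq i p) => [_ | ip]; last case: (eqVneq i q) => [_ | iq];
  case: (eqVneq j p) => [-> | jp];
  rewrite ?eqxx ?(negbTE neq_pq) ?(negbTE neq_qp) ?(negbTE jp) //=;
  case: (j == q) => /=; ring.
Qed.

Lemma plane_mx1 : plane_mx 1 0 0 1 = 1%:M.
Proof. by rewrite /plane_mx subrr !scale0r !addr0. Qed.

Lemma plane_mx_unit x00 x01 x10 x11 : x00 * x11 - x01 * x10 = 1 ->
  plane_mx x00 x01 x10 x11 \in unitmx.
Proof.
move=> det1.
have inv : plane_mx x00 x01 x10 x11 *m plane_mx x11 (- x01) (- x10) x00 = 1%:M.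
  by rewrite plane_mx_mul -plane_mx1; congr plane_mx; rewrite -?det1; ring.
by case: (mulmx1_unit inv).
Qed.

End PlaneMatrix.

Section FirstRowMatrix.
Variables (R : idomainType) (n : nat) (w : 'rV[R]_n.+1).

Definition first_row_mx : 'M[R]_n.+1 := 1%:M + delta_mx ord0 0 *m w.

Lemma first_row_mxE i j : first_row_mx i j = (i == j)%:R + (i == ord0)%:R * w 0 j.
Proof. by rewrite !mxE big_ord1 !mxE eqxx andbT. Qed.

Lemma first_row_mx_upper : w 0 ord0 = 0 -> upper_unitri first_row_mx.
Proof.
move=> w00 i j; rewrite first_row_mxE; split.
  case: ltnP => // ji.
  have ij : (i == j) = false by rewrite -(inj_eq val_inj) /= gtn_eqF.
  have i0 : (i == ord0) = false by rewrite -(inj_eq val_inj) /= gtn_eqF // (leq_ltn_trans _ ji).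
  by rewrite ij i0 mul0r addr0.
by move=> ->; rewrite eqxx; case: eqP => [->|]; rewrite ?w00 ?mulr0 ?mul0r addr0.
Qed.

Lemma first_row_mx_mulE (a : 'cV[R]_n.+1) i :
  (first_row_mx *m a) i 0 = a i 0 + (i == ord0)%:R * (w *m a) 0 0.
Proof. by rewrite mulmxDl mul1mx -mulmxA !mxE big_ord1 !mxE eqxx andbT. Qed.

End FirstRowMatrix.

Section GPhiElementary.
Variables (R : idomainType) (n : nat) (phi : 'rV[R]_n).
Hypotheses (phi_neq0 : forall i, phi 0 i != 0) (phi_chain : dvd_chain phi).

Lemma plane_mx_G_Phi (p q : 'I_n) x00 x01 x10 x11 : p != q -> (p <= q)%N ->
  x00 * x11 - x01 * x10 = 1 -> dvdR (phi 0 q) (x10 * phi 0 p) ->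
  G_Phi (diag_mx phi) (plane_mx p q x00 x01 x10 x11).
Proof.
move=> neq_pq le_pq det1 dvd10; apply/G_Phi_diagP => //.
split=> [|i j]; first exact: plane_mx_unit.
rewrite plane_mxE //; case: (eqVneq i p) => [-> | ip]; last case: (eqVneq i q) => [-> | iq].
- case: ifP => [/eqP -> | _]; first exact/dvdR_mull/dvdR_refl.
  case: ifP => [/eqP -> | _]; last by rewrite mul0r; apply: dvdR0.
  exact/dvdR_mull/phi_chain.
- case: ifP => [/eqP -> // | _]; case: ifP => [/eqP -> | _]; last by rewrite mul0r; apply: dvdR0.
  exact/dvdR_mull/dvdR_refl.
- case: (eqVneq i j) => [-> | _]; first by rewrite mul1r; apply: dvdR_refl.
  by rewrite mul0r; apply: dvdR0.
Qed.

End GPhiElementary.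

Section Unimodular.
Variables (R : idomainType) (n : nat).

Definition unimodular_col (a : 'cV[R]_n) := exists rho : 'rV[R]_n, (rho *m a) 0 0 = 1.

Lemma unimodular_mulmx (G : 'M[R]_n) a :
  G \in unitmx -> unimodular_col a -> unimodular_col (G *m a).
Proof.
move=> Gu [rho rho_a]; exists (rho *m invmx G).
by rewrite -mulmxA (mulmxA (invmx G)) mulVmx // mul1mx.
Qed.

Lemma unimodular_col_neq0 a : unimodular_col a -> exists j, a j 0 != 0.
Proof.
case=> rho rho_a; case: (pickP (fun j => a j 0 != 0)) => [j aj | a0]; first by exists j.
move: rho_a; rewrite mxE big1 => [/esym/eqP | i _]; first by rewrite oner_eq0.
by move/negbFE/eqP: (a0 i) => ->; rewrite mulr0.
Qed.

Lemma unimodular_col_unitmx (A : 'M[R]_n) j : A \in unitmx -> unimodular_col (col j A).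
Proof.
move=> Au; exists (row j (invmx A)).
have : (invmx A *m A) j j = 1 by rewrite mulVmx // mxE eqxx.
by rewrite !mxE => <-; apply: eq_bigr => k _; rewrite !mxE.
Qed.

End Unimodular.

Section FirstEntry.
Variable R : idomainType.
Hypotheses (bezoutR : bezout_domain R) (sr15 : stable_range_1_5 R).

Lemma sr15_coprime_step (a b c psi : R) : c != 0 -> psi != 0 ->
  in_ideal [:: a; b; c] 1 ->
  exists k g1 g2, g1 * (a + b * k) + g2 * c = 1 /\ coprimeR g1 psi.
Proof.
move=> c_neq0 psi_neq0 abc.
have [k /in_ideal2P [x [y e1]]] := sr15 c_neq0 abc.
have xcpsi : in_ideal [:: x; c; psi] 1.
  by apply/in_ideal3P; exists (a + b * k), y, 0; rewrite e1; ring.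
have [k2 /in_ideal2P [u [v e2]]] := sr15 psi_neq0 xcpsi.
exists k, (x + c * k2), (y - (a + b * k) * k2); split; last by exists u, v.
by rewrite [RHS]e1; ring.
Qed.

Variables (m : nat) (phi : 'rV[R]_m.+2).
Hypotheses (phi_neq0 : forall i, phi 0 i != 0) (phi_chain : dvd_chain phi).

Lemma first_entry_one_of_last (a : 'cV[R]_m.+2) : unimodular_col a ->
  a ord_max 0 != 0 -> exists G, G_Phi (diag_mx phi) G /\ (G *m a) ord0 0 = 1.
Proof.
move=> [rho rho_a] al; set l : 'I_m.+2 := ord_max in al *.
have [e [s [def_e dvd_e]]] :=
  bezout_gcd_family bezoutR (fun i : 'I_m.+1 => a (lift ord0 i) 0).
have unimod3 : in_ideal [:: a ord0 0; e; a l 0] 1.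
  have [t def_t] : dvdR e (\sum_i rho 0 (lift ord0 i) * a (lift ord0 i) 0).
    by apply: dvdR_sum => i; apply/dvdR_mull.
  apply/in_ideal3P; exists (rho 0 ord0), t, 0.
  by rewrite -def_t -rho_a mxE big_ord_recl mul0r addr0.
have [psi def_psi] := @phi_chain ord0 l (leq0n _).
have psi_neq0 : psi != 0.
  by apply: contraNneq (phi_neq0 l) => psi0; rewrite def_psi psi0 mul0r.
have [k [g1 [g2 [e1 cop1]]]] := sr15_coprime_step al psi_neq0 unimod3.
have [h [mm det1]] : exists h mm, g1 * h - g2 * (psi * mm) = 1.
  by apply: coprimeR_completion cop1; exists (a ord0 0 + e * k), (a l 0); rewrite -e1; ring.
pose w : 'rV[R]_m.+2 := \row_j (if unlift ord0 j is Some i then k * s i else 0).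
have w_a : (w *m a) 0 0 = e * k.
  rewrite mxE big_ord_recl !mxE unlift_none mul0r add0r def_e mulr_suml.
  by apply: eq_bigr => i _; rewrite !mxE liftK; ring.
have UG : G_Phi (diag_mx phi) (first_row_mx w).
  by apply/upper_unitri_G_Phi/first_row_mx_upper => //; rewrite mxE unlift_none.
have l0 : (ord0 : 'I_m.+2) != l by rewrite -(inj_eq val_inj).
have TG : G_Phi (diag_mx phi) (plane_mx ord0 l g1 g2 (psi * mm) h).
  by apply: plane_mx_G_Phi => //; exists mm; rewrite def_psi; ring.
exists (plane_mx ord0 l g1 g2 (psi * mm) h *m first_row_mx w); split.
  exact: G_Phi_mul.
rewrite -mulmxA plane_mx_mulE // eqxx !first_row_mx_mulE w_a eqxx eq_sym (negbTE l0).
by rewrite mul1r mul0r addr0.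
Qed.

Lemma last_entry_neq0 (a : 'cV[R]_m.+2) : unimodular_col a ->
  exists G, G_Phi (diag_mx phi) G /\ (G *m a) ord_max 0 != 0.
Proof.
move=> ua; have [al | al] := eqVneq (a ord_max 0) 0; last first.
  by exists 1%:M; split; [apply: G_Phi1 | rewrite mul1mx].
have [j aj] := unimodular_col_neq0 ua.
have jl : j != ord_max by apply: contraNneq aj => ->; apply/eqP.
have [c def_c] := @phi_chain j ord_max (leq_ord j).
have c_neq0 : c != 0.
  by apply: contraNneq (phi_neq0 ord_max) => c0; rewrite def_c c0 mul0r.
exists (plane_mx j ord_max 1 0 c 1); split.
  apply: plane_mx_G_Phi => //; [exact: leq_ord | ring | by exists 1; rewrite def_c mul1r].
rewrite plane_mx_mulE // [ord_max == j]eq_sym (negbTE jl) eqxx al mulr0 addr0.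
exact: mulf_neq0.
Qed.

Lemma first_entry_one (a : 'cV[R]_m.+2) : unimodular_col a ->
  exists G, G_Phi (diag_mx phi) G /\ (G *m a) ord0 0 = 1.
Proof.
move=> ua; have [G1 [G1G al]] := last_entry_neq0 ua.
have ua1 := unimodular_mulmx (G_Phi_unitmx G1G) ua.
have [G2 [G2G a1]] := first_entry_one_of_last ua1 al.
by exists (G2 *m G1); split; [apply: G_Phi_mul | rewrite -mulmxA].
Qed.

End FirstEntry.

Section Blocks.
Variables (R : idomainType) (n : nat).

Lemma lower_unitri_block (c : 'cV[R]_n) (L : 'M[R]_n) :
  lower_unitri L -> lower_unitri (block_mx 1%:M 0 c L : 'M_(1 + n)).
Proof.
move=> hL i j; rewrite -[i]splitK -[j]splitK.
case: (split i) => i'; case: (split j) => j' /=; rewrite ?ord1.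
- by rewrite block_mxEul mxE.
- by rewrite block_mxEur mxE; split=> // /(congr1 val).
- by rewrite block_mxEdl; split=> // /(congr1 val).
- by rewrite block_mxEdr ltnS; split=> [|/rshift_inj]; case: (hL i' j').
Qed.

Lemma upper_unitri_block (r : 'rV[R]_n) (U : 'M[R]_n) :
  upper_unitri U -> upper_unitri (block_mx 1%:M r 0 U : 'M_(1 + n)).
Proof.
move=> hU i j; rewrite -[i]splitK -[j]splitK.
case: (split i) => i'; case: (split j) => j' /=; rewrite ?ord1.
- by rewrite block_mxEul mxE.
- by rewrite block_mxEur; split=> // /(congr1 val).
- by rewrite block_mxEdl mxE; split=> // /(congr1 val).
- by rewrite block_mxEdr ltnS; split=> [|/rshift_inj]; case: (hU i' j').
Qed.

Lemma G_Phi_block (phi : 'rV[R]_(1 + n)) (H : 'M[R]_n) :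
  (forall i, phi 0 i != 0) -> G_Phi (diag_mx (rsubmx phi)) H ->
  G_Phi (diag_mx phi) (block_mx 1%:M 0 0 H).
Proof.
move=> phi_neq0 HG; have /G_Phi_diagP [] // := HG.
  by move=> i; rewrite mxE.
move=> Hu Hdvd; apply/G_Phi_diagP => //; split.
  by rewrite unitmxE det_ublock det1 mul1r -unitmxE.
move=> i j; rewrite -[i]splitK -[j]splitK.
case: (split i) => i'; case: (split j) => j' /=; rewrite ?ord1.
- by rewrite block_mxEul mxE mul1r; apply: dvdR_refl.
- by rewrite block_mxEur mxE mul0r; apply: dvdR0.
- by rewrite block_mxEdl mxE mul0r; apply: dvdR0.
- by rewrite block_mxEdr; have := Hdvd i' j'; rewrite !mxE.
Qed.

Lemma block_schur_factor (B : 'M[R]_(1 + n)) (H L U : 'M[R]_n) : ulsubmx B = 1%:M ->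
  H \in unitmx -> drsubmx B - dlsubmx B *m ursubmx B = H *m L *m U ->
  B = block_mx (1%:M : 'M_1) 0 0 H *m block_mx 1%:M 0 (invmx H *m dlsubmx B) L
      *m block_mx 1%:M (ursubmx B) 0 U.
Proof.
move=> B00 Hu schur; rewrite !mulmx_block !mul1mx !mulmx0 !mul0mx !mulmx1.
rewrite !addr0 !add0r mul1mx mul0mx addr0 mulKVmx // -schur addrC subrK.
by rewrite -B00 submxK.
Qed.

Lemma schur_unitmx (B : 'M[R]_(1 + n)) : ulsubmx B = 1%:M -> B \in unitmx ->
  drsubmx B - dlsubmx B *m ursubmx B \in unitmx.
Proof.
move=> B00; rewrite -[B in B \in unitmx]submxK B00.
have -> : block_mx 1%:M (ursubmx B) (dlsubmx B) (drsubmx B) =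
  block_mx 1%:M 0 (dlsubmx B) (drsubmx B - dlsubmx B *m ursubmx B) *m
  block_mx 1%:M (ursubmx B) 0 1%:M.
  by rewrite mulmx_block !mul1mx !mulmx0 !mul0mx !mulmx1 ?addr0 ?add0r addrC subrK.
by rewrite !unitmxE det_mulmx det_lblock det_ublock !det1 !mul1r mulr1.
Qed.

End Blocks.

Section Factorization.
Variable R : idomainType.
Hypotheses (bezoutR : bezout_domain R) (sr15 : stable_range_1_5 R).

Lemma G_Phi_lower_upper_factor n (phi : 'rV[R]_n.+1) :
  (forall i, phi 0 i != 0) -> dvd_chain phi ->
  forall A, A \in unitmx -> exists H L U,
    [/\ G_Phi (diag_mx phi) H, lower_unitri L, upper_unitri U & A = H *m L *m U].
Proof.
elim: n phi => [|n IH] phi phi_neq0 phi_chain A Au.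
  exists A, 1%:M, 1%:M; split; [|exact: lower_unitri1|exact: upper_unitri1|].
    by apply/G_Phi_diagP => //; split=> // i j; rewrite !ord1; apply/dvdR_mull/dvdR_refl.
  by rewrite !mulmx1.
have [G [GG G1]] := first_entry_one bezoutR sr15 phi_neq0 phi_chain (unimodular_col_unitmx 0 Au).
have Gu := G_Phi_unitmx GG.
pose B : 'M[R]_(1 + n.+1) := G *m A.
have B00 : ulsubmx B = 1%:M.
  rewrite [LHS]mx11_scalar -G1 colE mulmxA -colE !mxE.
  by rewrite (_ : lshift n.+1 0 = 0) //; apply: val_inj.
have Bu : B \in unitmx by rewrite unitmx_mul Gu Au.
pose phi' := rsubmx (phi : 'rV_(1 + n.+1)).
have phi'_neq0 i : phi' 0 i != 0 by rewrite mxE.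
have [H [L [U [HG Ll Uu schur]]]] :=
  IH phi' phi'_neq0 (dvd_chain_rsubmx phi_chain) _ (schur_unitmx B00 Bu).
exists (invmx G *m (block_mx 1%:M 0 0 H : 'M_(1 + n.+1))),
  (block_mx 1%:M 0 (invmx H *m dlsubmx B) L), (block_mx 1%:M (ursubmx B) 0 U); split.
- exact: G_Phi_mul (G_Phi_inv GG) (G_Phi_block phi_neq0 HG).
- exact: lower_unitri_block Ll.
- exact: upper_unitri_block Uu.
have BX := block_schur_factor B00 (G_Phi_unitmx HG) schur.
by rewrite -!mulmxA [X in _ *m X]mulmxA -BX mulKmx.
Qed.

End Factorization.

Section DMatrix.
Variable R : idomainType.

Lemma dvd_chain_adjacent n (phi : 'rV[R]_n) :
  (forall i j : 'I_n, j = i.+1 :> nat -> dvdR (phi 0 i) (phi 0 j)) -> dvd_chain phi.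
Proof.
move=> adj; suff dvd_shift k (i j : 'I_n) : j = (i + k)%N :> nat -> dvdR (phi 0 i) (phi 0 j).
  by move=> i j ij; apply: (dvd_shift (j - i)%N); rewrite subnKC.
elim: k i j => [|k IH] i j def_j.
  have -> : j = i by apply: val_inj; rewrite /= def_j addn0.
  exact: dvdR_refl.
have lt_ik : (i + k < n)%N by rewrite -ltnS -addnS -def_j ltnS ltnW.
by apply: dvdR_trans (IH i (Ordinal lt_ik) erefl) (adj _ _ _); rewrite def_j addnS.
Qed.

Lemma dmatrix_diag_chain n (Phi : 'M[R]_n) : is_dmatrix Phi -> \det Phi != 0 ->
  exists2 phi : 'rV[R]_n, Phi = diag_mx phi & (forall i, phi 0 i != 0) /\ dvd_chain phi.
Proof.
case=> phi [-> adj]; rewrite det_diag => /prodf_neq0 phi_neq0.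
by exists phi => //; split; [move=> i; apply: phi_neq0 | apply: dvd_chain_adjacent].
Qed.

End DMatrix.

Lemma sr15_GL_factor (R : idomainType) n (Phi : 'M[R]_n.+1) :
  bezout_domain R -> stable_range_1_5 R ->
  is_dmatrix Phi -> \det Phi != 0 -> GL_factor Phi.
Proof.
move=> bezoutR sr15 /dmatrix_diag_chain /[apply] [[phi -> [phi_neq0 phi_chain]]] A.
split=> [Au | [H [L [U [HG Ll Uu ->]]]]].
  exact: G_Phi_lower_upper_factor.
by rewrite !unitmx_mul (G_Phi_unitmx HG) (lower_unitri_unitmx Ll) (upper_unitri_unitmx Uu).
Qed.

Section Converse.
Variable R : idomainType.

Lemma mulmx2E (A B : 'M[R]_2) i j : (A *m B) i j = A i 0 * B 0 j + A i 1 * B 1 j.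
Proof.
by rewrite mxE !big_ord_recl big_ord0 addr0 (_ : lift ord0 ord0 = 1) //; apply: val_inj.
Qed.

(* Factor [A = [[y, -x], [s, t]]] for [Phi = diag(1, c)]: the bottom row of
   [A U^-1 = H L] reads [(s, t - s U_01) = (H_10 + H_11 L_10, H_11)] with [c]
   dividing [H_10], so [t - s U_01] is coprime to [c]. *)
Lemma GL_factor2_coprime (c s t x y : R) : c != 0 ->
  GL_factor (diag_mx (\row_(j < 2) if j == 0 then 1 else c)) ->
  x * s + y * t = 1 -> exists u, coprimeR (t - s * u) c.
Proof.
move=> c_neq0 hGL xy; pose phi := \row_(j < 2) if j == 0 then 1 else c.
have phi_neq0 i : phi 0 i != 0 by rewrite mxE; case: ifP; rewrite ?oner_eq0 ?c_neq0.
have Au : plane_mx (0 : 'I_2) 1 y (- x) s t \in unitmx.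
  by apply: plane_mx_unit => //; rewrite -xy; ring.
have [H [L [U [HG Ll Uu eA]]]] := (hGL _).1 Au.
have [_ /(_ 1 0) [k Hk]] := (G_Phi_diagP phi_neq0 _).1 HG.
move: Hk; rewrite !mxE /= mulr1 => Hk.
have [/= L01 _] := Ll 0 1; have [_ /(_ erefl) L00] := Ll 0 0.
have [_ /(_ erefl) L11] := Ll 1 1; have [/= U10 _] := Uu 1 0.
have [_ /(_ erefl) U00] := Uu 0 0; have [_ /(_ erefl) U11] := Uu 1 1.
have es : s = H 1 0 + H 1 1 * L 1 0.
  have := congr1 (fun M : 'M[R]_2 => M 1 0) eA; rewrite plane_mxE //= !mulmx2E => ->.
  by rewrite L00 L01 U00 U10; ring.
have et : t - s * U 0 1 = H 1 1.
  have := congr1 (fun M : 'M[R]_2 => M 1 1) eA; rewrite plane_mxE //= !mulmx2E => ->.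
  by rewrite es L00 L01 L11 U11; ring.
exists (U 0 1); rewrite et.
exists ((x + y * U 0 1) * L 1 0 + y), (k * (x + y * U 0 1)).
rewrite -xy; have -> : t = H 1 1 + s * U 0 1 by rewrite -et; ring.
by rewrite es Hk; ring.
Qed.

Lemma GL_factor2_sr15 : bezout_domain R ->
  (forall Phi : 'M[R]_2, is_dmatrix Phi -> \det Phi != 0 -> GL_factor Phi) ->
  stable_range_1_5 R.
Proof.
move=> bezoutR hGL a b c c_neq0 /in_ideal3P [al [be [ga abc]]].
have [d [p [q [mu [nu [def_a def_b def_d]]]]]] := bezout_gcd2 bezoutR a b.
have [d0 | d_neq0] := eqVneq d 0.
  exists 0; apply/in_ideal2P; exists 0, ga.
  by rewrite abc def_a def_b d0; ring.
have pq : nu * q + mu * p = 1.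
  by apply: (mulIf d_neq0); rewrite mul1r {2}def_d def_a def_b; ring.
pose phi := \row_(j < 2) if j == 0 then 1 else c.
have dm : is_dmatrix (diag_mx phi).
  exists phi; split=> // i j; rewrite !mxE.
  case: i => [[|i] ?] //=; first by move=> _; eexists; rewrite mulr1.
  by case: j => [[|[|j]] //].
have det_neq0 : \det (diag_mx phi) != 0.
  by rewrite det_diag big_ord_recl big_ord1 !mxE /= mul1r.
have [u cop_u] := GL_factor2_coprime c_neq0 (hGL _ dm det_neq0) pq.
have cop_d : coprimeR d c by exists (al * p + be * q), ga; rewrite abc def_a def_b; ring.
have [w1 [w2 e]] := coprimeR_mull cop_d cop_u.
by exists (- u); apply/in_ideal2P; exists w1, w2; rewrite -e def_a def_b; ring.
Qed.

End Converse.

Theorem theorem2p14 (R : idomainType) (hB : bezout_domain R) :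
  (stable_range_1_5 R <->
     (forall Phi : 'M[R]_2, is_dmatrix Phi -> \det Phi != 0 -> GL_factor Phi)) /\
  (stable_range_1_5 R <->
     (forall (n : nat) (Phi : 'M[R]_n), (2 <= n)%N ->
        is_dmatrix Phi -> \det Phi != 0 -> GL_factor Phi)).
Proof.
split; split.
- by move=> sr15 Phi; apply: sr15_GL_factor.
- exact: GL_factor2_sr15.
- by move=> sr15 [|n] Phi // _; apply: sr15_GL_factor.
- by move=> hGL; apply: GL_factor2_sr15 => // Phi; apply: hGL.
Qed.
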